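(* For $x\in(0,\pi/2)$ let $A(x)=(\cos x)(\sin x-x\cos x)^{2}(x-\cos x\sin x)$, $B(x)=(x-\cos x\sin x)^{2}(\sin x-x\cos x)$, and $C(x)=x(\sin^{2}x)(-2x^{2}\cos x+x\sin x+\cos x\sin^{2}x)$. Then for every fixed $k\geq 1$ the function $x\mapsto C(x)/(kA(x)+B(x))$ is increasing on $(0,\pi/2)$, and for all $x\in(0,\pi/2)$ $$\frac{12}{5(k+2)}<\frac{C(x)}{kA(x)+B(x)}<1.$$ *)

From Stdlib Require Import Reals.
Open Scope R_scope.

Definition fA (x : R) : R :=
  cos x * (sin x - x * cos x) ^ 2 * (x - cos x * sin x).
Definition fB (x : R) : R :=
  (x - cos x * sin x) ^ 2 * (sin x - x * cos x).
Definition fC (x : R) : R :=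
  x * (sin x ^ 2) * (- 2 * x ^ 2 * cos x + x * sin x + cos x * sin x ^ 2).

Definition ratio (k x : R) : R := fC x / (k * fA x + fB x).

From Stdlib Require Import Reals Lra Psatz Nsatz.
From Coquelicot Require Import Coquelicot.
Open Scope R_scope.

(* With U = sin x - x cos x, V = x - cos x sin x and W the bracket in fC, one
   has fA = cos x U^2 V, fB = V^2 U, fC = x sin^2 x W, and the identity
   x sin^2 x - cos x U = V turns the ratio into G / (1 + (k - 1) F) with
   G = W / (U V) = 2x / V - sin x / U and F = cos x U / (x sin^2 x).  Both
   claims follow once G is increasing with 4/5 < G < 1 and F is decreasing
   with 0 < F < 1/3.

   All sign conditions behind these facts become polynomial in r = x^2 and
   w = x cot x after eliminating sin x through sin^2 x (x^2 + w^2) = x^2.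
   Taylor's theorem for sin and cos confines w to the band
   1 - r/3 - r^2/45 - r^3/315 <= w <= 1 - r/3 - r^2/45, and each of these
   polynomials is positive on the band: writing w = 1 - r/3 - r^2/45 - t r^3/315
   with 0 <= t <= 1, it expands with nonnegative coefficients in r, t, 1 - t. *)

Definition fU (x : R) : R := sin x - x * cos x.
Definition fV (x : R) : R := x - cos x * sin x.
Definition fW (x : R) : R := - 2 * x ^ 2 * cos x + x * sin x + cos x * sin x ^ 2.

Definition fF (x : R) : R := cos x * fU x / (x * sin x ^ 2).
Definition fG (x : R) : R := 2 * x / fV x - sin x / fU x.

Definition fP (x : R) : R :=
  fV x ^ 3 + 2 * fV x * fU x ^ 2 - 4 * x * sin x ^ 2 * fU x ^ 2.

Definition xcot (x : R) : R := x * cos x / sin x.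

(* x cot x = 1 - r/3 - r^2/45 - 2 r^3/945 - ... with r = x^2; the cruder r^3/315 in
   the lower bound leaves room for the Taylor remainders of sin and cos. *)
Definition cot_lower (r : R) : R := 1 - (r / 3 + r ^ 2 / 45 + r ^ 3 / 315).
Definition cot_upper (r : R) : R := 1 - (r / 3 + r ^ 2 / 45).

Lemma pos_of_mul_eq a b e p : 0 < a -> 0 < b -> 0 < p -> a * e = b * p -> 0 < e.
Proof. intros Ha Hb Hp E. destruct (Rle_or_lt e 0); [nra | assumption]. Qed.

Lemma lt_div_of_mul_lt a b c : 0 < c -> a * c < b -> a < b / c.
Proof.
  intros Hc H. apply Rmult_lt_reg_r with c; [assumption |].
  unfold Rdiv. rewrite Rmult_assoc, Rinv_l; lra.
Qed.

Lemma div_lt_of_lt_mul a b c : 0 < c -> a < b * c -> a / c < b.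
Proof.
  intros Hc H. apply Rmult_lt_reg_r with c; [assumption |].
  unfold Rdiv. rewrite Rmult_assoc, Rinv_l; lra.
Qed.

Lemma le_div_of_mul_le a b c : 0 < c -> a * c <= b -> a <= b / c.
Proof.
  intros Hc H. apply Rmult_le_reg_r with c; [assumption |].
  unfold Rdiv. rewrite Rmult_assoc, Rinv_l; lra.
Qed.

Lemma div_le_of_le_mul a b c : 0 < c -> a <= b * c -> a / c <= b.
Proof.
  intros Hc H. apply Rmult_le_reg_r with c; [assumption |].
  unfold Rdiv. rewrite Rmult_assoc, Rinv_l; lra.
Qed.

Lemma div_lt_div_of_lt_of_ge g1 g2 d1 d2 :
  0 < g1 -> g1 < g2 -> 0 < d2 -> d2 <= d1 -> g1 / d1 < g2 / d2.
Proof.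
  intros Hg1 Hg Hd2 Hd.
  apply Rle_lt_trans with (g1 / d2).
  - apply Rmult_le_compat_l; [lra | apply Rinv_le_contravar; lra].
  - apply Rmult_lt_compat_r; [apply Rinv_0_lt_compat |]; lra.
Qed.

Lemma INR_fact_S n : INR (Factorial.fact (S n)) = INR (S n) * INR (Factorial.fact n).
Proof. rewrite fact_simpl, mult_INR. reflexivity. Qed.

(* Evaluating the factorials through [INR_fact_S] avoids computing them in unary. *)
Ltac eval_taylor :=
  cbn [sum_f_R0 Nat.mul Nat.add]; rewrite ?INR_fact_S; cbn [Factorial.fact];
  rewrite ?S_INR; simpl INR; field.

Lemma sin_approx_3 a : sin_approx a 3 = a - a ^ 3 / 6 + a ^ 5 / 120 - a ^ 7 / 5040.
Proof. unfold sin_approx, sin_term. eval_taylor. Qed.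

Lemma sin_approx_4 a :
  sin_approx a 4 = a - a ^ 3 / 6 + a ^ 5 / 120 - a ^ 7 / 5040 + a ^ 9 / 362880.
Proof. unfold sin_approx, sin_term. eval_taylor. Qed.

Lemma cos_approx_3 a : cos_approx a 3 = 1 - a ^ 2 / 2 + a ^ 4 / 24 - a ^ 6 / 720.
Proof. unfold cos_approx, cos_term. eval_taylor. Qed.

Lemma cos_approx_4 a :
  cos_approx a 4 = 1 - a ^ 2 / 2 + a ^ 4 / 24 - a ^ 6 / 720 + a ^ 8 / 40320.
Proof. unfold cos_approx, cos_term. eval_taylor. Qed.

Lemma sin_taylor_bounds x : 0 <= x -> x <= PI ->
  x - x ^ 3 / 6 + x ^ 5 / 120 - x ^ 7 / 5040 <= sin x <=
  x - x ^ 3 / 6 + x ^ 5 / 120 - x ^ 7 / 5040 + x ^ 9 / 362880.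
Proof.
  intros H0 H1. destruct (sin_bound x 1 H0 H1) as [Hlo Hhi].
  rewrite sin_approx_3 in Hlo. rewrite sin_approx_4 in Hhi. lra.
Qed.

Lemma cos_taylor_bounds x : - PI / 2 <= x -> x <= PI / 2 ->
  1 - x ^ 2 / 2 + x ^ 4 / 24 - x ^ 6 / 720 <= cos x <=
  1 - x ^ 2 / 2 + x ^ 4 / 24 - x ^ 6 / 720 + x ^ 8 / 40320.
Proof.
  intros H0 H1. destruct (cos_bound x 1 H0 H1) as [Hlo Hhi].
  rewrite cos_approx_3 in Hlo. rewrite cos_approx_4 in Hhi. lra.
Qed.

Lemma PI2_lt_1571 : PI / 2 < 1.571.
Proof.
  destruct (Rlt_or_le (PI / 2) 1.571) as [H | H]; [assumption | exfalso].
  assert (Hc : 0 <= cos 1.571) by (apply cos_ge_0; lra).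
  destruct (cos_taylor_bounds 1.571); lra.
Qed.

Lemma sin_pos_half_pi x : 0 < x -> x < PI / 2 -> 0 < sin x.
Proof. intros H0 H1. apply sin_gt_0; pose proof PI2_Rlt_PI; lra. Qed.

Lemma cos_pos_half_pi x : 0 < x -> x < PI / 2 -> 0 < cos x.
Proof. intros H0 H1. apply cos_gt_0; lra. Qed.

Lemma x_cos_le_cot_upper x : 0 < x -> x < PI / 2 ->
  x * cos x <= sin x * cot_upper (x ^ 2).
Proof.
  intros H0 H1. pose proof PI2_lt_1571.
  destruct (sin_taylor_bounds x) as [Hs _]; try lra.
  destruct (cos_taylor_bounds x) as [_ Hc]; try lra.
  unfold cot_upper.
  assert (Hr : x ^ 2 < 2.5) by nra.
  assert (0 < 1 - (x ^ 2 / 3 + (x ^ 2) ^ 2 / 45)) by nra.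
  assert (E : (x - x ^ 3 / 6 + x ^ 5 / 120 - x ^ 7 / 5040) * (1 - (x ^ 2 / 3 + (x ^ 2) ^ 2 / 45))
              - x * (1 - x ^ 2 / 2 + x ^ 4 / 24 - x ^ 6 / 720 + x ^ 8 / 40320)
            = x * (x ^ 2) ^ 3 * (2 / 945 - 29 / 201600 * x ^ 2 + 1 / 226800 * (x ^ 2) ^ 2))
    by field.
  assert (0 < 2 / 945 - 29 / 201600 * x ^ 2 + 1 / 226800 * (x ^ 2) ^ 2) by nra.
  assert (0 < x * (x ^ 2) ^ 3) by (apply Rmult_lt_0_compat; [| apply pow_lt]; nra).
  nra.
Qed.

Lemma sin_cot_lower_le_x_cos x : 0 < x -> x < PI / 2 ->
  sin x * cot_lower (x ^ 2) <= x * cos x.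
Proof.
  intros H0 H1. pose proof PI2_lt_1571.
  pose proof (sin_pos_half_pi x H0 H1). pose proof (cos_pos_half_pi x H0 H1).
  unfold cot_lower.
  destruct (Rle_or_lt (1 - (x ^ 2 / 3 + (x ^ 2) ^ 2 / 45 + (x ^ 2) ^ 3 / 315)) 0); [nra |].
  destruct (sin_taylor_bounds x) as [_ Hs]; try lra.
  destruct (cos_taylor_bounds x) as [Hc _]; try lra.
  assert (Hr : x ^ 2 <= 2.47) by nra.
  assert (E : x * (1 - x ^ 2 / 2 + x ^ 4 / 24 - x ^ 6 / 720)
              - (x - x ^ 3 / 6 + x ^ 5 / 120 - x ^ 7 / 5040 + x ^ 9 / 362880)
                * (1 - (x ^ 2 / 3 + (x ^ 2) ^ 2 / 45 + (x ^ 2) ^ 3 / 315))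
            = x * (x ^ 2) ^ 3 * (1 / 945 - 107 / 259200 * x ^ 2 + 5 / 217728 * (x ^ 2) ^ 2
                 - 13 / 22861440 * (x ^ 2) ^ 3 + 1 / 114307200 * (x ^ 2) ^ 4))
    by field.
  assert (0 < 1 / 945 - 107 / 259200 * x ^ 2 + 5 / 217728 * (x ^ 2) ^ 2
              - 13 / 22861440 * (x ^ 2) ^ 3 + 1 / 114307200 * (x ^ 2) ^ 4).
  { set (r := x ^ 2) in *. nra. }
  assert (0 < x * (x ^ 2) ^ 3) by (apply Rmult_lt_0_compat; [| apply pow_lt]; nra).
  nra.
Qed.

Lemma xcot_band x : 0 < x -> x < PI / 2 ->
  cot_lower (x ^ 2) <= xcot x <= cot_upper (x ^ 2).
Proof.
  intros H0 H1.
  pose proof (sin_pos_half_pi x H0 H1).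
  pose proof (x_cos_le_cot_upper x H0 H1).
  pose proof (sin_cot_lower_le_x_cos x H0 H1).
  unfold xcot. split; [apply le_div_of_mul_le | apply div_le_of_le_mul]; lra.
Qed.

Lemma pos_on_cot_band (P : R -> R -> R) r w : 0 < r ->
  cot_lower r <= w <= cot_upper r ->
  (forall t, 0 <= t <= 1 -> 0 < P r (cot_upper r - t * r ^ 3 / 315)) ->
  0 < P r w.
Proof.
  intros Hr Hw HP.
  assert (Hr3 : 0 < r ^ 3) by (apply pow_lt; lra).
  unfold cot_lower, cot_upper in *.
  set (t := (1 - (r / 3 + r ^ 2 / 45) - w) * 315 / r ^ 3).
  replace w with (1 - (r / 3 + r ^ 2 / 45) - t * r ^ 3 / 315) by (unfold t; field; lra).
  apply HP. unfold t. split.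
  - apply Rmult_le_pos; [| apply Rlt_le, Rinv_0_lt_compat]; lra.
  - apply div_le_of_le_mul; lra.
Qed.

Ltac nonneg_sum :=
  repeat match goal with
  | |- 0 <= _ + _ => apply Rplus_le_le_0_compat
  | |- 0 <= _ * _ => apply Rmult_le_pos
  | |- 0 <= _ ^ _ => apply pow_le
  end; lra.

(* Closes [0 < r ^ n * (c0 + c1 t + S)] where [c0 + c1 t > 0] on [0, 1] and [S]
   has nonnegative coefficients in [r], [t], [1 - t]. *)
Ltac band_certificate :=
  apply Rmult_lt_0_compat;
  [try apply pow_lt; lra | apply Rplus_lt_le_0_compat; [lra | nonneg_sum]].

Definition polyW (r w : R) : R := r + w + w ^ 2 - 2 * r * w - 2 * w ^ 3.
Definition polyV (r w : R) : R := r - w + w ^ 2.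
Definition polyP (r w : R) : R :=
  r ^ 3 - 2 * r ^ 2 + r ^ 2 * w + r ^ 2 * w ^ 2
  - 2 * r * w + 7 * r * w ^ 2 - 8 * r * w ^ 3 + 3 * r * w ^ 4
  - 3 * w ^ 3 + 9 * w ^ 4 - 9 * w ^ 5 + 3 * w ^ 6.
Definition polyG_lower (r w : R) : R := r - 6 * r * w + 9 * w - 3 * w ^ 2 - 6 * w ^ 3.
Definition polyG_upper (r w : R) : R := r - 2 + w + w ^ 2.
Definition polyF_upper (r w : R) : R := r - 3 * w + 3 * w ^ 2.

Section CotBand.

Variables r w : R.
Hypothesis r_pos : 0 < r.
Hypothesis w_band : cot_lower r <= w <= cot_upper r.

Lemma polyW_pos : 0 < polyW r w.
Proof.
  apply (pos_on_cot_band polyW r w r_pos w_band). intros t Ht.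
  replace (polyW r _) with
    (r ^ 2 * (8/45 + (
      (2/45)*r*(1 - t) + (17/315)*r*t + (1/81)*r^2*(1 - t) + (23/2835)*r^2*t +
      (2/2025)*r^3*(1 - t) + (34/14175)*r^3*t + (2/91125)*r^4*(1 - t)^2 +
      (208/637875)*r^4*t*(1 - t) + (1133/4465125)*r^4*t^2 + (2/212625)*r^5*t*(1 - t) +
      (44/1488375)*r^5*t^2 + (2/1488375)*r^6*t^2 + (2/31255875)*r^7*t^3)))
    by (unfold polyW, cot_upper; field).
  band_certificate.
Qed.

Lemma polyV_pos : 0 < polyV r w.
Proof.
  apply (pos_on_cot_band polyV r w r_pos w_band). intros t Ht.
  replace (polyV r _) with
    (r * (2/3 + (
      (4/45)*r + (2/135)*r^2*(1 - t) + (11/945)*r^2*t + (1/2025)*r^3*(1 - t) +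
      (37/14175)*r^3*t + (2/14175)*r^4*t + (1/99225)*r^5*t^2)))
    by (unfold polyV, cot_upper; field).
  band_certificate.
Qed.

Lemma polyP_pos : 0 < polyP r w.
Proof.
  apply (pos_on_cot_band polyP r w r_pos w_band). intros t Ht.
  replace (polyP r _) with
    (r ^ 5 * (28/2025 - (2/189)*t + (
      (94/30375)*r*(1 - t) + (1048/212625)*r*t + (98/91125)*r^2*(1 - t)^2 +
      (1408/637875)*r^2*t*(1 - t) + (4964/4465125)*r^2*t^2 + (32/151875)*r^3*(1 - t)^2 +
      (538/1063125)*r^3*t*(1 - t) + (344/1063125)*r^3*t^2 + (88/4100625)*r^4*(1 - t)^3 +
      (1108/9568125)*r^4*t*(1 - t)^2 + (2132/13395375)*r^4*t^2*(1 - t) +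
      (91033/1406514375)*r^4*t^3 + (8/6834375)*r^5*(1 - t)^3 +
      (28/2278125)*r^5*t*(1 - t)^2 + (2557/111628125)*r^5*t^2*(1 - t) +
      (28229/2344190625)*r^5*t^3 + (2/61509375)*r^6*(1 - t)^3 +
      (109/143521875)*r^6*t*(1 - t)^2 + (856/334884375)*r^6*t^2*(1 - t) +
      (35081/21097715625)*r^6*t^3 + (1/2767921875)*r^7*(1 - t)^4 +
      (478/19375453125)*r^7*t*(1 - t)^3 + (1364/6458484375)*r^7*t^2*(1 - t)^2 +
      (367222/949397203125)*r^7*t^3*(1 - t) + (1334626/6645780421875)*r^7*t^4 +
      (2/6458484375)*r^8*t*(1 - t)^3 + (38/5023265625)*r^8*t^2*(1 - t)^2 +
      (2848/105488578125)*r^8*t^3*(1 - t) + (41036/2215260140625)*r^8*t^4 +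
      (1/9041878125)*r^9*t^2*(1 - t)^2 + (74/63293146875)*r^9*t^3*(1 - t) +
      (649/443052028125)*r^9*t^4 + (4/189879440625)*r^10*t^3*(1 - t)^2 +
      (146/1329156084375)*r^10*t^4*(1 - t) + (799/9304092590625)*r^10*t^5 +
      (1/443052028125)*r^11*t^4*(1 - t) + (13/3101364196875)*r^11*t^5 +
      (2/15506820984375)*r^12*t^5 + (1/325643240671875)*r^13*t^6)))
    by (unfold polyP, cot_upper; field).
  band_certificate.
Qed.

Lemma polyG_lower_pos : 0 < polyG_lower r w.
Proof.
  apply (pos_on_cot_band polyG_lower r w r_pos w_band). intros t Ht.
  replace (polyG_lower r _) with
    (r ^ 3 * (2/45 + (1/21)*t + (
      (23/675)*r*(1 - t) + (41/4725)*r*t + (2/675)*r^2*(1 - t) + (2/315)*r^2*t +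
      (2/30375)*r^3*(1 - t)^2 + (208/212625)*r^3*t*(1 - t) + (149/212625)*r^3*t^2 +
      (2/70875)*r^4*t*(1 - t) + (44/496125)*r^4*t^2 + (2/496125)*r^5*t^2 +
      (2/10418625)*r^6*t^3)))
    by (unfold polyG_lower, cot_upper; field).
  band_certificate.
Qed.

Lemma polyG_upper_pos : 0 < polyG_upper r w.
Proof.
  apply (pos_on_cot_band polyG_upper r w r_pos w_band). intros t Ht.
  replace (polyG_upper r _) with
    (r ^ 2 * (2/45 + (
      (2/135)*r*(1 - t) + (1/189)*r*t + (1/2025)*r^2*(1 - t) + (37/14175)*r^2*t +
      (2/14175)*r^3*t + (1/99225)*r^4*t^2)))
    by (unfold polyG_upper, cot_upper; field).
  band_certificate.
Qed.

Lemma polyF_upper_pos : 0 < polyF_upper r w.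
Proof.
  apply (pos_on_cot_band polyF_upper r w r_pos w_band). intros t Ht.
  replace (polyF_upper r _) with
    (r ^ 2 * (4/15 + (
      (2/45)*r*(1 - t) + (11/315)*r*t + (1/675)*r^2*(1 - t) + (37/4725)*r^2*t +
      (2/4725)*r^3*t + (1/33075)*r^4*t^2)))
    by (unfold polyF_upper, cot_upper; field).
  band_certificate.
Qed.

End CotBand.

Section Signs.

Variable x : R.
Hypothesis x_pos : 0 < x.
Hypothesis x_lt_PI2 : x < PI / 2.

Let s_pos := sin_pos_half_pi x x_pos x_lt_PI2.
Let c_pos := cos_pos_half_pi x x_pos x_lt_PI2.
Let band := xcot_band x x_pos x_lt_PI2.
Let r_pos : 0 < x ^ 2. Proof. apply pow_lt, x_pos. Qed.

Let xcot_pos : 0 < xcot x.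
Proof. unfold xcot. apply Rdiv_lt_0_compat; [apply Rmult_lt_0_compat |]; assumption. Qed.

Let norm_pos : 0 < x ^ 2 + xcot x ^ 2.
Proof. pose proof (pow2_ge_0 (xcot x)). lra. Qed.

Let trig_relations : sin x * sin x + cos x * cos x = 1 /\ x * cos x = xcot x * sin x.
Proof.
  split; [apply sin2_cos2 |].
  unfold xcot. field. apply Rgt_not_eq, s_pos.
Qed.

Ltac by_trig_relations :=
  destruct trig_relations; unfold fP, fU, fV, fW,
    polyW, polyV, polyP, polyG_lower, polyG_upper, polyF_upper;
  simpl; nsatz.

Lemma fU_pos : 0 < fU x.
Proof.
  assert (E : fU x = sin x * (1 - xcot x)) by by_trig_relations.
  rewrite E. apply Rmult_lt_0_compat; [assumption |].
  unfold cot_upper in band. pose proof (pow2_ge_0 (x ^ 2)). lra.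
Qed.

Lemma fV_pos : 0 < fV x.
Proof.
  assert (E : (x ^ 2 + xcot x ^ 2) * fV x = x * polyV (x ^ 2) (xcot x))
    by by_trig_relations.
  refine (pos_of_mul_eq _ _ _ _ norm_pos x_pos _ E).
  apply polyV_pos; assumption.
Qed.

Lemma fW_pos : 0 < fW x.
Proof.
  assert (E : x * fW x = sin x ^ 3 * polyW (x ^ 2) (xcot x)) by by_trig_relations.
  refine (pos_of_mul_eq _ _ _ _ x_pos _ _ E).
  - apply pow_lt; assumption.
  - apply polyW_pos; assumption.
Qed.

Lemma fP_pos : 0 < fP x.
Proof.
  assert (E : (x ^ 2 + xcot x ^ 2) ^ 3 * fP x = x ^ 3 * polyP (x ^ 2) (xcot x))
    by by_trig_relations.
  refine (pos_of_mul_eq _ _ _ _ _ _ _ E).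
  - apply pow_lt; assumption.
  - apply pow_lt; assumption.
  - apply polyP_pos; assumption.
Qed.

Lemma four_fUfV_lt_five_fW : 4 * (fU x * fV x) < 5 * fW x.
Proof.
  assert (E : sin x * (x ^ 2 + xcot x ^ 2) ^ 2 * (5 * fW x - 4 * (fU x * fV x))
              = x ^ 3 * polyG_lower (x ^ 2) (xcot x)) by by_trig_relations.
  enough (0 < 5 * fW x - 4 * (fU x * fV x)) by lra.
  refine (pos_of_mul_eq _ _ _ _ _ _ _ E).
  - apply Rmult_lt_0_compat; [| apply pow_lt]; assumption.
  - apply pow_lt; assumption.
  - apply polyG_lower_pos; assumption.
Qed.

Lemma fW_lt_fUfV : fW x < fU x * fV x.
Proof.
  assert (E : sin x * (x ^ 2 + xcot x ^ 2) ^ 2 * (fU x * fV x - fW x)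
              = x ^ 3 * xcot x * polyG_upper (x ^ 2) (xcot x)) by by_trig_relations.
  enough (0 < fU x * fV x - fW x) by lra.
  refine (pos_of_mul_eq _ _ _ _ _ _ _ E).
  - apply Rmult_lt_0_compat; [| apply pow_lt]; assumption.
  - apply Rmult_lt_0_compat; [apply pow_lt |]; assumption.
  - apply polyG_upper_pos; assumption.
Qed.

Lemma three_cos_fU_lt : 3 * cos x * fU x < x * sin x ^ 2.
Proof.
  assert (E : (x ^ 2 + xcot x ^ 2) * (x * sin x ^ 2 - 3 * cos x * fU x)
              = x * polyF_upper (x ^ 2) (xcot x)) by by_trig_relations.
  enough (0 < x * sin x ^ 2 - 3 * cos x * fU x) by lra.
  refine (pos_of_mul_eq _ _ _ _ norm_pos x_pos _ E).
  apply polyF_upper_pos; assumption.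
Qed.

End Signs.

Ltac nonzero_factors := let H := fresh in intro H;
  repeat match type of H with
  | _ * _ = 0 => apply Rmult_integral in H; destruct H as [H | H]
  end; lra.

Lemma is_derive_fF y : 0 < y -> y < PI / 2 ->
  is_derive fF y (- (fW y / (y ^ 2 * sin y ^ 3))).
Proof.
  intros H0 H1.
  pose proof (sin_pos_half_pi y H0 H1). pose proof (sin2_cos2 y) as Hsc. unfold Rsqr in Hsc.
  unfold fF, fU, fW. auto_derive.
  - repeat split; nonzero_factors.
  - field_simplify_eq; [| split; nonzero_factors]. simpl. nsatz.
Qed.

Lemma is_derive_fG y : 0 < y -> y < PI / 2 ->
  is_derive fG y (fP y / (fU y ^ 2 * fV y ^ 2)).
Proof.
  intros H0 H1.
  pose proof (fU_pos y H0 H1) as Hu. pose proof (fV_pos y H0 H1) as Hv.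
  pose proof (sin2_cos2 y) as Hsc. unfold Rsqr in Hsc.
  unfold fG, fP, fU, fV in *. auto_derive.
  - repeat split; nonzero_factors.
  - field_simplify_eq; [| repeat split; nonzero_factors]. simpl. nsatz.
Qed.

Lemma fF_decreasing x y : 0 < x -> x < y -> y < PI / 2 -> fF y < fF x.
Proof.
  intros Hx Hxy Hy.
  enough (- fF x < - fF y) by lra.
  apply (incr_function (fun z => - fF z) 0 (PI / 2)
           (fun z => fW z / (z ^ 2 * sin z ^ 3))); [| | exact Hx | exact Hxy | exact Hy].
  - intros z Hz0 Hz1. rewrite <- (Ropp_involutive (fW z / _)).
    exact (is_derive_opp fF z _ (is_derive_fF z Hz0 Hz1)).
  - intros z Hz0 Hz1. apply Rdiv_lt_0_compat; [apply fW_pos; assumption |].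
    apply Rmult_lt_0_compat; apply pow_lt; [| apply sin_pos_half_pi]; assumption.
Qed.

Lemma fG_increasing x y : 0 < x -> x < y -> y < PI / 2 -> fG x < fG y.
Proof.
  intros Hx Hxy Hy.
  apply (incr_function fG 0 (PI / 2) (fun z => fP z / (fU z ^ 2 * fV z ^ 2)));
    [| | exact Hx | exact Hxy | exact Hy].
  - exact is_derive_fG.
  - intros z Hz0 Hz1. apply Rdiv_lt_0_compat; [apply fP_pos; assumption |].
    apply Rmult_lt_0_compat; apply pow_lt; [apply fU_pos | apply fV_pos]; assumption.
Qed.

Lemma fG_bounds x : 0 < x -> x < PI / 2 -> 4 / 5 < fG x < 1.
Proof.
  intros H0 H1.
  pose proof (fU_pos x H0 H1). pose proof (fV_pos x H0 H1).
  pose proof (four_fUfV_lt_five_fW x H0 H1). pose proof (fW_lt_fUfV x H0 H1).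
  assert (Huv : 0 < fU x * fV x) by (apply Rmult_lt_0_compat; assumption).
  replace (fG x) with (fW x / (fU x * fV x))
    by (unfold fG, fW, fU, fV in *; field; lra).
  split; [apply lt_div_of_mul_lt | apply div_lt_of_lt_mul]; lra.
Qed.

Lemma fF_bounds x : 0 < x -> x < PI / 2 -> 0 < fF x < 1 / 3.
Proof.
  intros H0 H1.
  pose proof (fU_pos x H0 H1). pose proof (cos_pos_half_pi x H0 H1).
  pose proof (three_cos_fU_lt x H0 H1).
  assert (Hd : 0 < x * sin x ^ 2)
    by (apply Rmult_lt_0_compat; [| apply pow_lt, sin_pos_half_pi]; assumption).
  unfold fF. split.
  - apply Rdiv_lt_0_compat; [apply Rmult_lt_0_compat |]; assumption.
  - apply div_lt_of_lt_mul; lra.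
Qed.

Lemma kfA_fB_factor k x : x <> 0 -> sin x <> 0 ->
  k * fA x + fB x = fU x * fV x * (x * sin x ^ 2 * (1 + (k - 1) * fF x)).
Proof.
  intros Hx Hs. pose proof (sin2_cos2 x) as Hsc. unfold Rsqr in Hsc.
  unfold fA, fB, fF, fU, fV.
  field_simplify_eq; [simpl; nsatz | split; assumption].
Qed.

Lemma ratio_eq_fG_fF k x : 1 <= k -> 0 < x -> x < PI / 2 ->
  ratio k x = fG x / (1 + (k - 1) * fF x).
Proof.
  intros Hk H0 H1.
  pose proof (sin_pos_half_pi x H0 H1). pose proof (fF_bounds x H0 H1).
  pose proof (fU_pos x H0 H1). pose proof (fV_pos x H0 H1).
  assert (0 < 1 + (k - 1) * fF x) by nra.
  unfold ratio. rewrite kfA_fB_factor by lra.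
  unfold fC, fG, fU, fV in *. field. repeat split; lra.
Qed.

Theorem lemma2p1 (k : R) (hk : 1 <= k) :
  (forall x y : R, 0 < x -> x < y -> y < PI / 2 -> ratio k x < ratio k y) /\
  (forall x : R, 0 < x -> x < PI / 2 ->
     12 / (5 * (k + 2)) < ratio k x /\ ratio k x < 1).
Proof.
  split.
  - intros x y Hx Hxy Hy.
    rewrite !ratio_eq_fG_fF by lra.
    pose proof (fG_bounds x Hx ltac:(lra)). pose proof (fF_bounds y ltac:(lra) Hy).
    pose proof (fG_increasing x y Hx Hxy Hy). pose proof (fF_decreasing x y Hx Hxy Hy).
    apply div_lt_div_of_lt_of_ge; nra.
  - intros x Hx Hx2.
    rewrite ratio_eq_fG_fF by lra.
    pose proof (fG_bounds x Hx Hx2). pose proof (fF_bounds x Hx Hx2).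
    assert (Hd1 : 1 <= 1 + (k - 1) * fF x) by nra.
    assert (Hd2 : 1 + (k - 1) * fF x <= (k + 2) / 3) by nra.
    split.
    + replace (12 / (5 * (k + 2))) with ((4 / 5) / ((k + 2) / 3)) by (field; lra).
      apply div_lt_div_of_lt_of_ge; lra.
    + apply div_lt_of_lt_mul; nra.
Qed.
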